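(* Let $I=\prod_{i=1}^d[a_i,b_i]$ with $a_i<b_i$, and let $f\in C(I)$ satisfy $f(\mathbf x)=0$ for all $\mathbf x\in\partial I$ and $f(\mathbf x_0)>0$ for some $\mathbf x_0$ in the interior $I^0$. Then there exists a function $$Q(\mathbf x)=A\sum_{i=1}^d(x_i-a_i)^2+C$$ with constants $A<0$ and $C\in\mathbb R$ such that $Q(\mathbf x)>0$ and $Q(\mathbf x)\ge f(\mathbf x)$ for all $\mathbf x\in I$, and there exists $\mathbf y\in I^0$ with $Q(\mathbf y)=f(\mathbf y)$. *)

(* Points of R^d are modelled as x : nat -> R whose coordinates
   with index >= d are 0 (so the model is exactly R^d); coordinates 0..d-1
   stand for x_1..x_d. *)
From Stdlib Require Import Reals.
Open Scope R_scope.

Definition pt := nat -> R.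

Definition in_Rd (d : nat) (x : pt) : Prop := forall i, (d <= i)%nat -> x i = 0.

Definition in_box (d : nat) (a b : pt) (x : pt) : Prop :=
  in_Rd d x /\ forall i, (i < d)%nat -> a i <= x i <= b i.

Definition in_interior (d : nat) (a b : pt) (x : pt) : Prop :=
  in_Rd d x /\ forall i, (i < d)%nat -> a i < x i < b i.

Definition in_boundary (d : nat) (a b : pt) (x : pt) : Prop :=
  in_box d a b x /\ ~ in_interior d a b x.

Definition continuous_on_box (d : nat) (a b : pt) (f : pt -> R) : Prop :=
  forall x, in_box d a b x -> forall eps, eps > 0 ->
    exists delta, delta > 0 /\
      forall y, in_box d a b y ->
        (forall i, (i < d)%nat -> Rabs (y i - x i) < delta) ->
        Rabs (f y - f x) < eps.

Fixpoint sqdist (d : nat) (a x : pt) : R :=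
  match d with
  | O => 0
  | S n => sqdist n a x + (x n - a n) ^ 2
  end.

(* Choose A < 0 so that Q decreases by f(x0)/2 between x0 and the far corner b,
   where sum_i (x_i - a_i)^2 is maximal on I, and let C be the maximum over I of
   the continuous function f - A sum_i (x_i - a_i)^2.  Then Q >= f on I with
   equality at a maximiser y, and Q >= f(x0)/2 > 0 on I.  On the boundary f = 0, so
   there the maximised function is at most -A sum_i (b_i - a_i)^2, strictly below its
   value f(x0)/2 - A sum_i (b_i - a_i)^2 at x0: hence y is interior. *)
From Stdlib Require Import Reals Lra Lia FunctionalExtensionality Classical_Prop.
From mathcomp Require all_boot all_algebra all_classical all_reals all_analysis.
From mathcomp Require Rstruct Rstruct_topology.
Open Scope R_scope.

Lemma interior_in_box d a b x : in_interior d a b x -> in_box d a b x.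
Proof.
intros [Hx H]; split; [exact Hx|].
intros i Hi; specialize (H i Hi); lra.
Qed.

Lemma continuous_on_box_const d a b c : continuous_on_box d a b (fun _ => c).
Proof.
intros x _ eps Heps; exists 1; split; [lra|].
intros y _ _; unfold Rminus; rewrite Rplus_opp_r, Rabs_R0; exact Heps.
Qed.

Lemma continuous_on_box_plus d a b f g :
  continuous_on_box d a b f -> continuous_on_box d a b g ->
  continuous_on_box d a b (fun x => f x + g x).
Proof.
intros Hf Hg x Hx eps Heps.
destruct (Hf x Hx (eps / 2)) as [df [Hdf Hf']]; [lra|].
destruct (Hg x Hx (eps / 2)) as [dg [Hdg Hg']]; [lra|].
exists (Rmin df dg); split; [apply Rmin_pos; assumption|].
intros y Hy Hyx.
assert (Hyf : forall i, (i < d)%nat -> Rabs (y i - x i) < df).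
{ intros i Hi; eapply Rlt_le_trans; [apply Hyx, Hi | apply Rmin_l]. }
assert (Hyg : forall i, (i < d)%nat -> Rabs (y i - x i) < dg).
{ intros i Hi; eapply Rlt_le_trans; [apply Hyx, Hi | apply Rmin_r]. }
specialize (Hf' y Hy Hyf); specialize (Hg' y Hy Hyg).
replace (f y + g y - (f x + g x)) with ((f y - f x) + (g y - g x)) by ring.
eapply Rle_lt_trans; [apply Rabs_triang | lra].
Qed.

Lemma continuous_on_box_scal d a b c f :
  continuous_on_box d a b f -> continuous_on_box d a b (fun x => c * f x).
Proof.
intros Hf x Hx eps Heps.
destruct (Hf x Hx (eps / (Rabs c + 1))) as [del [Hdel Hf']].
{ apply Rdiv_lt_0_compat; [exact Heps | pose proof (Rabs_pos c); lra]. }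
exists del; split; [exact Hdel|].
intros y Hy Hyx; specialize (Hf' y Hy Hyx).
rewrite <- Rmult_minus_distr_l, Rabs_mult.
pose proof (Rabs_pos c); pose proof (Rabs_pos (f y - f x)).
assert (E : eps = (Rabs c + 1) * (eps / (Rabs c + 1))) by (field; lra).
rewrite E; nra.
Qed.

Lemma continuous_on_box_sq_coord d a b i : (i < d)%nat -> a i <= b i ->
  continuous_on_box d a b (fun x => (x i - a i) ^ 2).
Proof.
intros Hi Hab x [_ Hx] eps Heps.
set (K := 2 * (b i - a i) + 1).
exists (eps / K); split; [apply Rdiv_lt_0_compat; unfold K; lra|].
intros y [_ Hy] Hyx.
specialize (Hx i Hi); specialize (Hy i Hi); specialize (Hyx i Hi).
replace ((y i - a i) ^ 2 - (x i - a i) ^ 2) with ((y i - x i) * (y i + x i - 2 * a i)) by ring.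
rewrite Rabs_mult.
assert (Hs : Rabs (y i + x i - 2 * a i) <= 2 * (b i - a i)) by (apply Rabs_le; lra).
pose proof (Rabs_pos (y i - x i)); pose proof (Rabs_pos (y i + x i - 2 * a i)).
assert (E : eps = K * (eps / K)) by (field; unfold K; lra).
rewrite E; unfold K in *; nra.
Qed.

Lemma continuous_on_box_sqdist d a b n : (n <= d)%nat ->
  (forall i, (i < d)%nat -> a i <= b i) ->
  continuous_on_box d a b (sqdist n a).
Proof.
intros Hn Hab; induction n as [|n IH]; cbn [sqdist].
- apply continuous_on_box_const.
- apply continuous_on_box_plus; [apply IH; lia|].
  apply continuous_on_box_sq_coord; [lia | apply Hab; lia].
Qed.

Lemma sqdist_bounds d a b x : (forall i, (i < d)%nat -> a i <= x i <= b i) ->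
  0 <= sqdist d a x <= sqdist d a b.
Proof.
induction d as [|n IH]; intros H; cbn [sqdist]; [lra|].
assert (IH' : 0 <= sqdist n a x <= sqdist n a b) by (apply IH; intros i Hi; apply H; lia).
specialize (H n (Nat.lt_succ_diag_r n)).
assert (0 <= (x n - a n) ^ 2 <= (b n - a n) ^ 2) by nra; lra.
Qed.

Lemma sqdist_lt_interior d a b x : (1 <= d)%nat ->
  (forall i, (i < d)%nat -> a i < x i < b i) ->
  sqdist d a x < sqdist d a b.
Proof.
intros Hd H; destruct d as [|n]; [lia|]; cbn [sqdist].
assert (Hn : sqdist n a x <= sqdist n a b).
{ apply sqdist_bounds; intros i Hi; specialize (H i ltac:(lia)); lra. }
specialize (H n (Nat.lt_succ_diag_r n)).
assert ((x n - a n) ^ 2 < (b n - a n) ^ 2) by nra; lra.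
Qed.

Definition clamp (lo hi t : R) : R := Rmin (Rmax t lo) hi.

Lemma clamp_in lo hi t : lo <= hi -> lo <= clamp lo hi t <= hi.
Proof. intros H; unfold clamp, Rmin, Rmax; repeat destruct Rle_dec; lra. Qed.

Lemma clamp_id lo hi t : lo <= t <= hi -> clamp lo hi t = t.
Proof. intros H; unfold clamp, Rmin, Rmax; repeat destruct Rle_dec; lra. Qed.

Lemma clamp_lipschitz lo hi s t : lo <= hi ->
  Rabs (clamp lo hi s - clamp lo hi t) <= Rabs (s - t).
Proof.
intros H; unfold clamp, Rmin, Rmax.
repeat destruct Rle_dec; unfold Rabs; repeat destruct Rcase_abs; lra.
Qed.

Definition box_retract (d : nat) (a b x : pt) : pt :=
  fun i => if Nat.ltb i d then clamp (a i) (b i) (x i) else 0.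

Section BoxRetract.
Variables (d : nat) (a b : pt).
Hypothesis Hab : forall i, (i < d)%nat -> a i <= b i.

Lemma box_retract_in_box x : in_box d a b (box_retract d a b x).
Proof.
split; intros i Hi; unfold box_retract.
- replace (Nat.ltb i d) with false by (symmetry; apply Nat.ltb_ge; exact Hi); reflexivity.
- replace (Nat.ltb i d) with true by (symmetry; apply Nat.ltb_lt; exact Hi).
  apply clamp_in, Hab, Hi.
Qed.

Lemma box_retract_id x : in_box d a b x -> box_retract d a b x = x.
Proof.
intros [Hx Hbox]; apply functional_extensionality; intros i; unfold box_retract.
destruct (Nat.ltb_spec i d) as [Hi|Hi].
- apply clamp_id, Hbox, Hi.
- symmetry; apply Hx, Hi.
Qed.

Lemma box_retract_ext x y : (forall i, (i < d)%nat -> x i = y i) ->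
  box_retract d a b x = box_retract d a b y.
Proof.
intros H; apply functional_extensionality; intros i; unfold box_retract.
destruct (Nat.ltb_spec i d) as [Hi|Hi]; [rewrite H by exact Hi|]; reflexivity.
Qed.

Lemma box_retract_lipschitz x y i : (i < d)%nat ->
  Rabs (box_retract d a b y i - box_retract d a b x i) <= Rabs (y i - x i).
Proof.
intros Hi; unfold box_retract.
replace (Nat.ltb i d) with true by (symmetry; apply Nat.ltb_lt; exact Hi).
apply clamp_lipschitz, Hab, Hi.
Qed.

End BoxRetract.

Module BoxCompactness.
Import all_boot all_algebra all_classical all_reals all_analysis Rstruct Rstruct_topology.

Definition pt_of_row {d : nat} (v : 'rV[R]_d) : pt :=
  fun i => oapp (fun j : 'I_d => v ord0 j) 0%R (insub i).

Lemma pt_of_row_coord d (v : 'rV[R]_d) (j : 'I_d) : pt_of_row v j = v ord0 j.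
Proof. by rewrite /pt_of_row valK. Qed.

Lemma pt_of_rowK d (x : pt) i : (i < d)%coq_nat -> pt_of_row (\row_(j < d) x j)%R i = x i.
Proof. by move=> /ssrnat.ltP Hi; rewrite -[i]/(val (Ordinal Hi)) pt_of_row_coord mxE. Qed.

Lemma continuous_on_box_attains_max (d : nat) (a b : pt) (g : pt -> R) :
  (forall i, (i < d)%coq_nat -> a i <= b i) ->
  continuous_on_box d a b g ->
  exists c, in_box d a b c /\ forall x, in_box d a b x -> g x <= g c.
Proof.
move=> Hab Hg.
(* Composed with the retraction, g becomes continuous on all of 'rV_d, where the
   box is a compact product of segments. *)
pose G (v : 'rV[R]_d) := g (box_retract d a b (pt_of_row v)).
have G_cont : continuous G.
  move=> v; apply: (proj2 (@cvgrPdist_lt R R^o _ (nbhs v) _ G (G v))) => e /RltP e0.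
  have [del [del0 Hdel]] := Hg _ (box_retract_in_box _ _ _ Hab (pt_of_row v)) e e0.
  apply/nbhs_ballP; exists del => /=; first exact/RltP.
  move=> w [_ Hvw]; apply/RltP; change (Rabs (G v - G w) < e); rewrite Rabs_minus_sym.
  apply: Hdel => [|i Hi]; first exact: box_retract_in_box.
  apply: Rle_lt_trans (box_retract_lipschitz _ _ _ Hab _ _ _ Hi) _.
  have /ssrnat.ltP Hi' := Hi; rewrite -[i]/(val (Ordinal Hi')) !pt_of_row_coord.
  by rewrite Rabs_minus_sym; apply/RltP; apply: Hvw.
pose K := [set v : 'rV[R]_d | forall i : 'I_d, `[a i, b i]%classic (v ord0 i)]%classic.
have K_compact : compact K.
  by apply: (@rV_compact _ _ (fun i : 'I_d => `[a i, b i]%classic)) => i; exact: segment_compact.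
have K_row x : in_box d a b x -> K (\row_(j < d) x j)%R.
  move=> [_ Hx] j /=; rewrite mxE in_itv /=.
  by have [? ?] := Hx j (ssrnat.ltP (ltn_ord j)); apply/andP; split; apply/RleP.
have K_nonempty : (K !=set0)%classic.
  by eexists; apply: K_row (box_retract_in_box _ _ _ Hab a).
have [c _ Hc] := compact_EVT_max K_nonempty K_compact (continuous_subspaceT G_cont).
exists (box_retract d a b (pt_of_row c)); split; first exact: box_retract_in_box.
move=> x Hx; have := Hc _ (mem_set (K_row x Hx)); rewrite /G.
rewrite (box_retract_ext d a b _ x (pt_of_rowK d x)) box_retract_id //.
by move/RleP.
Qed.

End BoxCompactness.

Theorem theorem5p1 (d : nat) (a b : pt) (f : pt -> R) :
  (1 <= d)%nat ->
  (forall i, (i < d)%nat -> a i < b i) ->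
  continuous_on_box d a b f ->
  (forall x, in_boundary d a b x -> f x = 0) ->
  (exists x0, in_interior d a b x0 /\ f x0 > 0) ->
  exists A C : R, A < 0 /\
    (forall x, in_box d a b x ->
       A * sqdist d a x + C > 0 /\ A * sqdist d a x + C >= f x) /\
    (exists y, in_interior d a b y /\ A * sqdist d a y + C = f y).
Proof.
intros Hd Hab Hf Hbd [x0 [Hx0 Hfx0]].
assert (Hab' : forall i, (i < d)%nat -> a i <= b i) by (intros i Hi; specialize (Hab i Hi); lra).
set (M := sqdist d a b).
assert (Hs0 : sqdist d a x0 < M) by (apply sqdist_lt_interior; [exact Hd | apply Hx0]).
set (A := - f x0 / (2 * (M - sqdist d a x0))).
assert (HA : A < 0) by (apply Rdiv_neg_pos; lra).
assert (HAM : A * M = A * sqdist d a x0 - f x0 / 2) by (unfold A; field; lra).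
assert (HQM : forall x, in_box d a b x -> A * M <= A * sqdist d a x).
{ intros x Hx; apply Rmult_le_compat_neg_l; [lra | apply sqdist_bounds, Hx]. }
clearbody A M.
set (g := fun x => f x + - A * sqdist d a x).
assert (Hg : continuous_on_box d a b g).
{ apply continuous_on_box_plus; [exact Hf|].
  apply continuous_on_box_scal, continuous_on_box_sqdist; [lia | exact Hab']. }
destruct (BoxCompactness.continuous_on_box_attains_max d a b g Hab' Hg) as [c [Hc Hmax]].
assert (Hgc : f x0 / 2 - A * M <= g c).
{ pose proof (Hmax x0 (interior_in_box _ _ _ _ Hx0)); unfold g in *; lra. }
exists A, (g c); split; [exact HA | split].
- intros x Hx; pose proof (HQM x Hx); pose proof (Hmax x Hx); unfold g in *; lra.
- exists c; split; [| unfold g; ring].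
  destruct (classic (in_interior d a b c)) as [Hi | Hni]; [exact Hi | exfalso].
  pose proof (Hbd c (conj Hc Hni)); pose proof (HQM c Hc); unfold g in *; lra.
Qed.
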